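(* Let $V$ be a real vector space with a basis $\mathbf{e}=\{e_\lambda\}_{\lambda\in\Lambda}$, and let $\boldsymbol{\phi}=\{\phi_\lambda\}_{\lambda\in\Lambda}\subseteq\operatorname{Hom}_{\mathbb{R}}(V,\mathbb{R})$ satisfy $\phi_\lambda(e_\mu)\ge0$ for all $\lambda\neq\mu$. For $x\in V$: (1) $x$ has a Zariski decomposition with respect to $(\mathbf{e},\boldsymbol{\phi})$ if and only if $(-\infty,x]_{\mathbf{e}}\cap\operatorname{Nef}(\boldsymbol{\phi})\neq\emptyset$; (2) a Zariski decomposition of $x$, if it exists, is unique; (3) if a Zariski decomposition $x=y+z$ exists with $z\neq0$, then (3.1) for the matrix $Q=(\phi_\lambda(e_\mu))_{\lambda,\mu\in\operatorname{Supp}(z;\mathbf{e})}$ one has $(-1)^{\#\operatorname{Supp}(z;\mathbf{e})}\det Q>0$, and if $Q$ is symmetric then $Q$ is negative definite; (3.2) $\{e_\lambda\}_{\lambda\in\operatorname{Supp}(z;\mathbf{e})}$ is linearly independent in $V/\operatorname{Num}(\boldsymbol{\phi})$.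
   Context: Write $x=\sum_\lambda x(\lambda;\mathbf{e})e_\lambda$. $x\le_{\mathbf{e}}y$ means $x(\lambda;\mathbf{e})\le y(\lambda;\mathbf{e})$ for all $\lambda$. $\operatorname{Supp}(x;\mathbf{e})=\{\lambda:x(\lambda;\mathbf{e})\neq0\}$, $(-\infty,x]_{\mathbf{e}}=\{v:v\le_{\mathbf{e}}x\}$, $\operatorname{Nef}(\boldsymbol{\phi})=\{v:\phi_\lambda(v)\ge0\ \forall\lambda\}$, $\operatorname{Num}(\boldsymbol{\phi})=\{v:\phi_\lambda(v)=0\ \forall\lambda\}$. A Zariski decomposition of $x$ with respect to $(\mathbf{e},\boldsymbol{\phi})$ is $x=y+z$ with (i) $y\in\operatorname{Nef}(\boldsymbol{\phi})$, $z\ge_{\mathbf{e}}0$; (ii) $\phi_\lambda(y)=0$ for all $\lambda\in\operatorname{Supp}(z;\mathbf{e})$; (iii) $\{w\in\sum_{\lambda\in\operatorname{Supp}(z;\mathbf{e})}\mathbb{R}_{\ge0}e_\lambda:\phi_\lambda(w)\ge0\ \forall\lambda\in\operatorname{Supp}(z;\mathbf{e})\}=\{0\}$. *)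

From HB Require Import structures.
From Stdlib Require Import ClassicalEpsilon.
From mathcomp Require Import all_boot all_order all_algebra.
From mathcomp Require Import reals.
Set Implicit Arguments. Unset Strict Implicit. Unset Printing Implicit Defensive.
Import Order.TTheory GRing.Theory Num.Theory.
Local Open Scope ring_scope.

Section ZariskiDefs.
Variables (R : realType) (V : lmodType R) (Lam : Type).

Definition lin_indep (e : Lam -> V) : Prop :=
  forall (n : nat) (f : 'I_n -> Lam) (c : 'I_n -> R),
    injective f -> \sum_(i < n) c i *: e (f i) = 0 -> forall i, c i = 0.

Definition spanning (e : Lam -> V) : Prop :=
  forall v : V, exists (n : nat) (f : 'I_n -> Lam) (c : 'I_n -> R),
    v = \sum_(i < n) c i *: e (f i).

Definition is_basis (e : Lam -> V) : Prop := lin_indep e /\ spanning e.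

Definition is_coord (e : Lam -> V) (v : V) (c : Lam -> R) : Prop :=
  exists (n : nat) (f : 'I_n -> Lam), injective f /\
    (forall l, c l <> 0 -> exists i, f i = l) /\
    v = \sum_(i < n) c (f i) *: e (f i).

Definition coord (e : Lam -> V) (v : V) : Lam -> R :=
  epsilon (inhabits (fun _ => 0)) (is_coord e v).

Definition le_e (e : Lam -> V) (x y : V) : Prop :=
  forall l, coord e x l <= coord e y l.

Definition Supp (e : Lam -> V) (x : V) (l : Lam) : Prop := coord e x l <> 0.

Definition Nef (phi : Lam -> {scalar V}) (v : V) : Prop :=
  forall l, 0 <= phi l v.

Definition Num_ (phi : Lam -> {scalar V}) (v : V) : Prop :=
  forall l, phi l v = 0.

Definition in_cone (e : Lam -> V) (S : Lam -> Prop) (w : V) : Prop :=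
  exists (n : nat) (f : 'I_n -> Lam) (c : 'I_n -> R),
    (forall i, S (f i)) /\ (forall i, 0 <= c i) /\
    w = \sum_(i < n) c i *: e (f i).

Definition zariski_decomp (e : Lam -> V) (phi : Lam -> {scalar V})
    (x y z : V) : Prop :=
  [/\ x = y + z,
      Nef phi y /\ le_e e 0 z,
      (forall l, Supp e z l -> phi l y = 0) &
      (forall w, in_cone e (Supp e z) w ->
         (forall l, Supp e z l -> 0 <= phi l w) -> w = 0)].

End ZariskiDefs.

From Pilot Require Import Defs.
From HB Require Import structures.
From Stdlib Require Import ClassicalEpsilon.
From mathcomp Require Import all_boot all_order all_algebra.
From mathcomp Require Import boolp classical_sets reals ring lra.
Set Implicit Arguments. Unset Strict Implicit. Unset Printing Implicit Defensive.
Import Order.TTheory GRing.Theory Num.Theory.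
Local Open Scope ring_scope.

(* Parts (1) and (2) rest on the lattice structure of nef classes: since
   phi_l(e_m) >= 0 for l <> m, the coordinatewise maximum of two nef classes is nef,
   and so is the coordinatewise supremum of all nef v with v0 <= v <= x.  Hence, as
   soon as some nef class lies below x, there is a greatest one y, and x = y + (x - y)
   is a Zariski decomposition: any failure of (ii) or (iii) would let y be enlarged.
   Conversely the positive part of any Zariski decomposition is this greatest nef
   class, which gives uniqueness.

   Part (3) is linear algebra: restricted to Supp(z), condition (iii) says that the
   Metzler matrix Q admits no nonzero nonnegative c with Q c >= 0.  Eliminating the
   first index (a Schur complement) preserves both properties and multiplies the
   determinant by a negative pivot, so induction gives the sign of det Q and, for
   symmetric Q, negative definiteness; in particular Q is invertible, which is (3.2). *)

Section MetzlerMatrices.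
Variable R : realFieldType.

Definition metzler n (A : 'M[R]_n) := forall i j, i != j -> 0 <= A i j.

(* Condition (iii) of [zariski_decomp] in matrix form; for Metzler [A] it says that
   [- A] is a nonsingular M-matrix. *)
Definition nonneg_cone_trivial n (A : 'M[R]_n) :=
  forall c : 'cV[R]_n, (forall i, 0 <= c i 0) -> (forall i, 0 <= (A *m c) i 0) -> c = 0.

Definition qform n (A : 'M[R]_n) (v : 'rV[R]_n) := (v *m A *m v^T) 0 0.

Lemma corner_block_ind (P : forall n, 'M[R]_n -> Prop) :
  (forall A : 'M[R]_0, P 0 A) ->
  (forall n a (r : 'rV[R]_n) (c : 'cV[R]_n) (D : 'M[R]_n),
     (forall B : 'M[R]_n, P n B) -> P (1 + n)%N (block_mx a%:M r c D)) ->
  forall n (A : 'M[R]_n), P n A.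
Proof.
move=> P0 PS; elim=> [|n IH] A //; pose A' : 'M[R]_(1 + n) := A.
have := PS n (ulsubmx A' 0 0) (ursubmx A') (dlsubmx A') (drsubmx A') IH.
by rewrite -mx11_scalar submxK.
Qed.

Lemma col_mx_ge0 m n (u : 'cV[R]_m) (d : 'cV[R]_n) :
  (forall i, 0 <= u i 0) -> (forall i, 0 <= d i 0) -> forall i, 0 <= col_mx u d i 0.
Proof.
by move=> u0 d0 i; rewrite -[i]splitK; case: split => j; rewrite ?col_mxEu ?col_mxEd.
Qed.

Section SchurComplement.
Variables (n : nat) (a : R) (r : 'rV[R]_n) (c : 'cV[R]_n) (D : 'M[R]_n).

Local Notation A := (block_mx a%:M r c D).

Definition schur := D - c *m (a^-1 *: r).

Lemma det_block_schur : a != 0 -> \det A = a * \det schur.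
Proof.
move=> a0; have -> : A = block_mx 1%:M 0 (a^-1 *: c) 1%:M *m block_mx a%:M r 0 schur.
  rewrite mulmx_block !mul0mx !mulmx0 !mul1mx !addr0 mul_mx_scalar scalerA divff // scale1r.
  by rewrite /schur -scalemxAl -scalemxAr addrC subrK.
by rewrite det_mulmx det_lblock det_ublock !det1 det_scalar1 !mul1r.
Qed.

Lemma qform_block_schur (b : R) (w : 'rV[R]_n) : a != 0 ->
  a * qform A (row_mx b%:M w) =
  (a * b + (r *m w^T) 0 0) * (a * b + (w *m c) 0 0) + a * qform schur w.
Proof.
move=> a0; rewrite /qform /schur.
set p := (r *m w^T) 0 0; set q := (w *m c) 0 0; set s := (w *m D *m w^T) 0 0.
have wc : w *m c = q%:M by apply: mx11_scalar.
have rw : r *m w^T = p%:M by apply: mx11_scalar.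
have wDw : w *m D *m w^T = s%:M by apply: mx11_scalar.
rewrite tr_row_mx mul_row_block mul_row_col tr_scalar_mx !mulmxDl wc -(mulmxA _ r) rw wDw.
rewrite -!scalar_mxM -!raddfD /= mxE eqxx mulr1n.
rewrite mulmxBr mulmxBl wDw !mulmxA wc -scalemxAr -scalemxAl -mulmxA rw.
rewrite -scalar_mxM scale_scalar_mx -raddfB /= mxE eqxx mulr1n.
by field.
Qed.

Lemma schur_sym : A^T = A -> schur^T = schur.
Proof.
rewrite tr_block_mx => /eq_block_mx [_ cr rc DD].
by rewrite /schur linearB /= trmx_mul DD linearZ /= cr -scalemxAl -scalemxAr -[c in RHS]rc.
Qed.

Hypothesis metzler_A : metzler A.

Lemma metzler_block : [/\ forall j, 0 <= r 0 j, forall i, 0 <= c i 0 & metzler D].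
Proof.
split=> [j|i|i j ij].
- by have := @metzler_A (lshift n 0) (rshift 1 j); rewrite eq_lrshift block_mxEur; apply.
- by have := @metzler_A (rshift 1 i) (lshift n 0); rewrite eq_rlshift block_mxEdl; apply.
- have := @metzler_A (rshift 1 i) (rshift 1 j).
  by rewrite (inj_eq (@rshift_inj 1 n)) ij block_mxEdr; apply.
Qed.

Hypothesis cone_A : nonneg_cone_trivial A.

Lemma metzler_block_corner_lt0 : a < 0.
Proof.
have [_ c_ge0 _] := metzler_block.
rewrite ltNge; apply/negP => a_ge0.
have : col_mx (1%:M : 'M[R]_1) (0 : 'cV[R]_n) = 0.
  apply: cone_A; first by apply: col_mx_ge0 => i; rewrite mxE ?ler0n.
  rewrite mul_block_col !mulmx0 !addr0 !mulmx1.
  by apply: col_mx_ge0 => i; rewrite ?mxE ?mulrn_wge0.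
move/matrixP/(_ (lshift n 0) 0); rewrite col_mxEu !mxE /=.
by move/eqP; rewrite oner_eq0.
Qed.

Lemma schur_metzler : metzler schur.
Proof.
have [r_ge0 c_ge0 metzler_D] := metzler_block.
have ai_lt0 : a^-1 < 0 by rewrite invr_lt0 metzler_block_corner_lt0.
move=> i j ij; rewrite !mxE big_ord1 !mxE subr_ge0.
have := metzler_D i j ij; have := mulr_ge0 (c_ge0 i) (r_ge0 j); nra.
Qed.

Lemma schur_cone : nonneg_cone_trivial schur.
Proof.
have [r_ge0 c_ge0 _] := metzler_block; have a_lt0 := metzler_block_corner_lt0.
move=> u u_ge0 Su_ge0; pose p := (r *m u) 0 0.
have p_ge0 : 0 <= p by rewrite /p mxE sumr_ge0 // => k _; rewrite mulr_ge0.
pose t := - (a^-1 * p).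
have Atu : A *m col_mx t%:M u = col_mx 0 (schur *m u).
  rewrite mul_block_col; congr col_mx.
    rewrite [r *m u]mx11_scalar -/p -scalar_mxM -raddfD /=.
    have -> : a * t + p = 0 by rewrite /t; field; lra.
    exact: raddf0.
  rewrite /schur mulmxBl mul_mx_scalar -mulmxA -scalemxAl [r *m u]mx11_scalar -/p.
  by rewrite scale_scalar_mx mul_mx_scalar /t scaleNr addrC.
have : col_mx t%:M u = 0.
  apply: cone_A; last by rewrite Atu; apply: col_mx_ge0 => // i; rewrite mxE.
  apply: col_mx_ge0 => // i; rewrite (ord1 i) mxE eqxx mulr1n.
  by rewrite /t oppr_ge0 nmulr_rle0 // invr_lt0.
by move/eqP; rewrite col_mx_eq0 => /andP[_ /eqP].
Qed.

End SchurComplement.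

Theorem metzler_cone_det_sign n (A : 'M[R]_n) :
  metzler A -> nonneg_cone_trivial A -> 0 < (-1) ^+ n * \det A.
Proof.
elim/corner_block_ind: n / A => [A _ _|n a r c D IH mA tA].
  by rewrite det_mx00 mulr1 ltr01.
have a_lt0 := metzler_block_corner_lt0 mA tA.
have := IH _ (schur_metzler mA tA) (schur_cone mA tA).
rewrite det_block_schur ?ltr0_neq0 // -[(1 + n)%N]/n.+1 exprS; nra.
Qed.

Theorem metzler_cone_negdef n (A : 'M[R]_n) :
  metzler A -> nonneg_cone_trivial A -> A^T = A ->
  forall v, v != 0 -> qform A v < 0.
Proof.
elim/corner_block_ind: n / A => [A _ _ _ v|n a r c D IH mA tA sA v].
  by rewrite thinmx0 eqxx.
have a_lt0 := metzler_block_corner_lt0 mA tA.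
have qS := IH _ (schur_metzler mA tA) (schur_cone mA tA) (schur_sym sA).
have rc : forall w : 'rV_n, (r *m w^T) 0 0 = (w *m c) 0 0.
  move: sA; rewrite tr_block_mx => /eq_block_mx [_ _ <- _] w.
  by rewrite -[in RHS](trmxK w) -trmx_mul [RHS]mxE.
rewrite -[v]hsubmxK [lsubmx v]mx11_scalar.
move: (lsubmx v 0 0) (rsubmx v) => b w vn0.
have := @qform_block_schur _ a r c D b w (ltr0_neq0 a_lt0); rewrite -rc.
suff : 0 < (a * b + (r *m w^T) 0 0) ^+ 2 + a * qform (schur a r c D) w by nra.
have [w0|wn0] := eqVneq w 0.
  have b0 : b != 0 by apply: contraNneq vn0 => ->; rewrite w0 raddf0 row_mx0.
  rewrite w0 /qform trmx0 !mulmx0 mxE mulr0 addr0 addr0 exprn_even_gt0 //.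
  by rewrite mulf_neq0 // ltr0_neq0.
by rewrite ltr_pwDr ?sqr_ge0 // nmulr_rgt0 ?qS.
Qed.
End MetzlerMatrices.

Section Coordinates.
Variables (R : realType) (V : lmodType R) (Lam : Type) (e : Lam -> V).
Hypothesis he : is_basis e.

(* [Lam] has no decidable equality; [{classic Lam}] supplies one classically, so that
   finite supports can be handled as duplicate-free sequences. *)
Local Notation L := {classic Lam}.
Local Notation cd v := (Defs.coord e v).

Definition lincomb (s : seq L) (a : Lam -> R) : V := \sum_(l <- s) a l *: e l.

Definition supported (s : seq L) (a : Lam -> R) := forall l : L, l \notin s -> a l = 0.

Lemma lincomb_tnth (s : seq L) a :
  lincomb s a = \sum_(i < size s) a (tnth (in_tuple s) i) *: e (tnth (in_tuple s) i).
Proof. by rewrite /lincomb big_tnth. Qed.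

Lemma lincombD s a b : lincomb s (fun l => a l + b l) = lincomb s a + lincomb s b.
Proof. by rewrite /lincomb -big_split; apply: eq_bigr => l _; rewrite scalerDl. Qed.

Lemma lincombZ s k a : lincomb s (fun l => k * a l) = k *: lincomb s a.
Proof. by rewrite /lincomb scaler_sumr; apply: eq_bigr => l _; rewrite scalerA. Qed.

Lemma lincomb_eq0 s a : uniq s -> lincomb s a = 0 -> forall l : L, l \in s -> a l = 0.
Proof.
move=> us s0 l ls; have inj : injective (tnth (in_tuple s)) by apply/tuple_uniqP.
have := he.1 _ _ (fun i => a (tnth (in_tuple s) i)) inj; rewrite -lincomb_tnth.
move=> /(_ s0) a0; have lt : (index l s < size s)%N by rewrite index_mem.
by have := a0 (Ordinal lt); rewrite (tnth_nth l) nth_index.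
Qed.

Lemma lincomb_widen s1 s2 a : uniq s1 -> uniq s2 -> {subset s1 <= s2} ->
  supported s1 a -> lincomb s2 a = lincomb s1 a.
Proof.
move=> u1 u2 sub z; rewrite /lincomb (bigID (mem s1)) /= [X in _ + X]big1 ?addr0.
  rewrite -big_filter; apply/perm_big/uniq_perm; rewrite ?filter_uniq // => l.
  by rewrite mem_filter andb_idr //; apply: sub.
by move=> l /z ->; rewrite scale0r.
Qed.

Definition finrep (v : V) (a : Lam -> R) :=
  exists2 s, uniq s & supported s a /\ v = lincomb s a.

Lemma finrep0 : finrep 0 (fun _ => 0).
Proof. by exists [::] => //; split => //; rewrite /lincomb big_nil. Qed.

Lemma finrep_e (m : L) : finrep (e m) (fun l => if l == m :> L then 1 else 0).
Proof.
exists [:: m] => //; split; first by move=> l; rewrite inE => /negbTE ->.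
by rewrite /lincomb big_seq1 eqxx scale1r.
Qed.

Lemma finrepZ k v a : finrep v a -> finrep (k *: v) (fun l => k * a l).
Proof.
case=> s us [za ->]; exists s => //.
by split; [move=> l /za ->; rewrite mulr0 | rewrite lincombZ].
Qed.

Lemma finrepD u v a b : finrep u a -> finrep v b -> finrep (u + v) (fun l => a l + b l).
Proof.
case=> s1 u1 [z1 ->] [s2 u2 [z2 ->]].
pose s := undup (s1 ++ s2); have us : uniq s := undup_uniq _.
have sub1 : {subset s1 <= s} by move=> l ls; rewrite mem_undup mem_cat ls.
have sub2 : {subset s2 <= s} by move=> l ls; rewrite mem_undup mem_cat ls orbT.
have zs c s' : {subset s' <= s} -> supported s' c -> supported s c.
  by move=> sub zc l ls; apply: zc; apply: contra ls; apply: sub.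
exists s => //; split.
  by move=> l ls; rewrite (zs _ _ sub1 z1) ?(zs _ _ sub2 z2) ?addr0.
by rewrite lincombD (lincomb_widen _ _ sub1) // (lincomb_widen _ _ sub2).
Qed.

Lemma finrep0_eq0 a : finrep 0 a -> a =1 (fun=> 0).
Proof.
case=> s us [za /esym s0] l.
by have [/(lincomb_eq0 us s0)|/za] := boolP ((l : L) \in s).
Qed.

Lemma finrep_uniq v a b : finrep v a -> finrep v b -> a =1 b.
Proof.
move=> ra rb l; have := finrepD ra (finrepZ (-1) rb).
rewrite scaleN1r subrr => /finrep0_eq0/(_ l)/eqP.
by rewrite mulN1r subr_eq0 => /eqP.
Qed.

Lemma finrep_exists v : exists a, finrep v a.
Proof.
have [n [f [c ->]]] := he.2 v.
elim/big_rec: _ => [|i w _ [a ra]]; first by exists (fun=> 0); apply: finrep0.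
by eexists; apply/finrepD/ra/finrepZ/(finrep_e (f i : L)).
Qed.

Lemma finrep_is_coord v a : finrep v a -> is_coord e v a.
Proof.
case=> s us [za ->]; exists (size s), (tnth (in_tuple s)); split; [|split].
- have inj : injective (tnth (in_tuple s)) by apply/tuple_uniqP.
  exact: inj.
- move=> l al0; have /(nthP (l : L)) [i lt <-] : (l : L) \in s by apply/negPn/negP => /za.
  by exists (Ordinal lt); rewrite (tnth_nth (l : L)).
- exact: lincomb_tnth.
Qed.

Lemma is_coord_finrep v a : is_coord e v a -> finrep v a.
Proof.
case=> n [f [inj [fsupp ->]]]; exists [seq (f i : L) | i <- enum 'I_n].
  by rewrite map_inj_uniq ?enum_uniq.
split; last by rewrite /lincomb big_map big_enum.
move=> l; apply: contraNeq => /eqP/fsupp [i <-].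
by apply: (map_f (fun i => f i : L)); rewrite mem_enum.
Qed.

Lemma coord_finrep v : finrep v (cd v).
Proof.
apply: is_coord_finrep; apply: epsilon_spec.
have [a ra] := finrep_exists v.
exists a; exact: finrep_is_coord.
Qed.

Lemma coord_lincomb s a : uniq s -> supported s a -> cd (lincomb s a) =1 a.
Proof. by move=> us za; apply: finrep_uniq (coord_finrep _) _; exists s. Qed.

Lemma coordD u v : cd (u + v) =1 (fun l => cd u l + cd v l).
Proof. exact: finrep_uniq (coord_finrep _) (finrepD (coord_finrep u) (coord_finrep v)). Qed.

Lemma coordZ k v : cd (k *: v) =1 (fun l => k * cd v l).
Proof. exact: finrep_uniq (coord_finrep _) (finrepZ k (coord_finrep v)). Qed.

Lemma coordB u v : cd (u - v) =1 (fun l => cd u l - cd v l).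
Proof. by move=> l; rewrite coordD -scaleN1r coordZ mulN1r. Qed.

Lemma coord0 : cd 0 =1 (fun=> 0).
Proof. exact: finrep_uniq (coord_finrep _) finrep0. Qed.

Lemma coord_e (m : L) : cd (e m) =1 (fun l => if l == m :> L then 1 else 0).
Proof. exact: finrep_uniq (coord_finrep _) (finrep_e m). Qed.

Lemma coord_inj u v : cd u =1 cd v -> u = v.
Proof.
move=> uv; apply/eqP; rewrite -subr_eq0; apply/eqP.
have [s _ [z0 ->]] := coord_finrep (u - v).
by rewrite /lincomb big1 // => l _; rewrite coordB uv subrr scale0r.
Qed.

Lemma common_support u v : exists2 s, uniq s & supported s (cd u) /\ supported s (cd v).
Proof.
have [s1 _ [z1 _]] := coord_finrep u; have [s2 _ [z2 _]] := coord_finrep v.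
exists (undup (s1 ++ s2)); first exact: undup_uniq.
split=> l; rewrite mem_undup mem_cat negb_or => /andP[].
  by move=> /z1.
by move=> _ /z2.
Qed.

End Coordinates.

Section GreatestNef.
Variables (R : realType) (V : lmodType R) (Lam : Type).
Variables (e : Lam -> V) (phi : Lam -> {scalar V}).
Hypothesis he : is_basis e.
Hypothesis hphi : forall l m : Lam, l <> m -> 0 <= phi l (e m).

Local Notation L := {classic Lam}.
Local Notation cd v := (Defs.coord e v).
Local Notation "u <=e v" := (le_e e u v) (at level 70).
Local Open Scope classical_set_scope.

Lemma phi_lincomb l s a : phi l (lincomb e s a) = \sum_(m <- s) a m * phi l (e m).
Proof. by rewrite raddf_sum; apply: eq_bigr => m _; apply: linearZ_LR. Qed.

Lemma phi_ge_at l u w : u <=e w ->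
  phi l u + (cd w l - cd u l) * phi l (e l) <= phi l w.
Proof.
move=> uw; set t := cd w l - cd u l.
pose d := w - (u + t *: e l).
have cd_d m : cd d m = cd w m - (cd u m + t * (if m == l :> L then 1 else 0)).
  by rewrite (coordB he) (coordD he) (coordZ he) (coord_e he).
have [s _ [_ ds]] := coord_finrep he d.
have d_ge0 : 0 <= phi l d.
  rewrite ds phi_lincomb sumr_ge0 // => m _; rewrite cd_d.
  have [->|ml] := eqVneq (m : L) l.
    by rewrite mulr1 /t (addrC (cd u l)) subrK subrr mul0r.
  rewrite mulr0 addr0 mulr_ge0 ?subr_ge0 ?uw //.
  by apply: hphi => lm; rewrite lm eqxx in ml.
have -> : w = u + t *: e l + d by rewrite /d addrC subrK.
by clearbody d; rewrite !raddfD /= linearZ_LR lerDl.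
Qed.

Lemma phi_ge0_at l w : (forall m, 0 <= cd w m) -> cd w l = 0 -> 0 <= phi l w.
Proof.
move=> w0 wl; have := @phi_ge_at l 0 w; rewrite raddf0 (coord0 he) wl subrr mul0r addr0.
by apply=> m; rewrite (coord0 he).
Qed.

Lemma join_exists u v : exists w, forall l, cd w l = Num.max (cd u l) (cd v l).
Proof.
have [s us [zu zv]] := common_support he u v.
exists (lincomb e s (fun l => Num.max (cd u l) (cd v l))); apply: (coord_lincomb he us).
by move=> l ls; rewrite zu ?zv ?maxxx.
Qed.

Lemma nef_join u v w : (forall l, cd w l = Num.max (cd u l) (cd v l)) ->
  Nef phi u -> Nef phi v -> Nef phi w.
Proof.
move=> cw nu nv l.
have [le_uv|le_vu] := leP (cd u l) (cd v l).
- have vw : v <=e w by move=> m; rewrite cw le_max lexx orbT.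
  apply: le_trans (nv l) _; have := phi_ge_at l vw.
  by rewrite cw max_r // subrr mul0r addr0.
- have uw : u <=e w by move=> m; rewrite cw le_max lexx.
  apply: le_trans (nu l) _; have := phi_ge_at l uw.
  by rewrite cw (max_l (ltW le_vu)) subrr mul0r addr0.
Qed.

Lemma in_cone_of_coord (S : Lam -> Prop) w :
  (forall l, 0 <= cd w l) -> (forall l, cd w l != 0 -> S l) -> in_cone e S w.
Proof.
move=> w0 wS; have [s us [zs ws]] := coord_finrep he w.
pose t : seq L := [seq l <- s | cd w l != 0].
have tS (l : L) : l \in t -> S l by rewrite mem_filter => /andP[/wS].
exists (size t), (tnth (in_tuple t)), (fun i => cd w (tnth (in_tuple t) i)).
split=> [i|]; first exact/tS/mem_tnth.
split=> //; rewrite -lincomb_tnth {1}ws; apply: lincomb_widen; rewrite ?filter_uniq //.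
  by move=> l; rewrite mem_filter => /andP[].
by move=> l; rewrite mem_filter negb_and negbK => /orP[/eqP|/zs].
Qed.

Lemma coord_in_cone (S : Lam -> Prop) w : in_cone e S w ->
  (forall l, 0 <= cd w l) /\ (forall l, cd w l != 0 -> S l).
Proof.
case=> n [f [c [fS [c0 ->]]]].
elim/big_rec: _ => [|i v _ [v0 vS]].
  by split=> l; rewrite (coord0 he) // eqxx.
split=> l; rewrite (coordD he) (coordZ he) (coord_e he (f i)).
  by rewrite addr_ge0 // mulr_ge0 //; case: ifP.
have [->|_] := eqVneq (l : L) (f i); first by move=> _; apply: fS.
by rewrite mulr0 add0r; apply: vS.
Qed.

Definition greatest_nef_below (x y : V) :=
  [/\ y <=e x, Nef phi y & forall v, v <=e x -> Nef phi v -> v <=e y].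

Lemma greatest_nef_below_uniq x y y' :
  greatest_nef_below x y -> greatest_nef_below x y' -> y = y'.
Proof.
case=> yx ny ymax [y'x ny' y'max]; apply: (coord_inj he) => l.
by apply/le_anti; rewrite (ymax _ y'x ny') (y'max _ yx ny).
Qed.

Lemma zariski_greatest x y z :
  zariski_decomp e phi x y z -> greatest_nef_below x y.
Proof.
case=> -> [ny z0] orth cone.
have z_ge0 l : 0 <= cd z l by have := z0 l; rewrite (coord0 he).
split=> // [l|v vx nv]; first by rewrite (coordD he) lerDl.
have [w cw] := join_exists v y.
have wy : w - y = 0.
  apply: cone => [|l Sl]; last by rewrite raddfB /= orth // subr0 (nef_join cw nv ny).
  apply: in_cone_of_coord => l; rewrite (coordB he) cw ?subr_ge0 ?le_max ?lexx ?orbT //.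
  apply: contraNnot => zl; have := vx l; rewrite (coordD he) zl addr0 => vy.
  by rewrite max_r // subrr.
by rewrite -(subr0_eq wy) => l; rewrite cw le_max lexx.
Qed.

Lemma greatest_nef_in_box v0 x : v0 <=e x -> Nef phi v0 ->
  exists y, [/\ v0 <=e y, y <=e x, Nef phi y &
    forall v, v0 <=e v -> v <=e x -> Nef phi v -> v <=e y].
Proof.
move=> v0x nv0; pose K v := [/\ v0 <=e v, v <=e x & Nef phi v].
have Kv0 : K v0 by split=> // l.
pose E l : set R := fun r => exists2 v, K v & cd v l = r.
have E_ne l : E l !=set0 by exists (cd v0 l), v0.
have E_ub l : ubound (E l) (cd x l) by move=> _ [v [_ vx _] <-]; apply: vx.
have E_sup l : has_sup (E l) by split; last exists (cd x l).
pose a l := sup (E l).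
have [s us [zx zv0]] := common_support he x v0.
have za : supported s a.
  move=> l ls; apply/le_anti/andP; split; first by rewrite -(zx l ls) ge_sup.
  by rewrite -(zv0 l ls); apply: sup_upper_bound; last exists v0.
pose y := lincomb e s a.
have cy := coord_lincomb he us za : cd y =1 a.
have K_le_y v : K v -> v <=e y.
  by move=> Kv l; rewrite cy; apply: sup_upper_bound; last exists v.
exists y; split=> [||l|v v0v vx nv]; last exact: K_le_y.
- exact: K_le_y.
- by move=> l; rewrite cy; apply: ge_sup.
(* [phi_ge_at] only needs [v] close to [y] in the coordinate [l]. *)
apply/ler_addgt0Pr => eps eps_gt0.
set p := phi l (e l); pose delta := eps / (`|p| + 1).
have delta_gt0 : 0 < delta by rewrite divr_gt0 // ltr_wpDl.
have [_ [v Kv <-] close] := sup_adherent delta_gt0 (E_sup l).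
have := phi_ge_at l (K_le_y v Kv); rewrite cy -/p.
have v_le_a : cd v l <= a l by rewrite -cy; apply: K_le_y.
have nv : 0 <= phi l v by case: Kv => _ _; apply.
have p_ge : - `|p| <= p by rewrite lerNl -normrN ler_norm.
have eps_eq : delta * (`|p| + 1) = eps by rewrite divfK // gt_eqF // ltr_wpDl.
move: close; rewrite -/(a l) => close.
have gap_p : 0 <= (a l - cd v l) * (p + `|p|) by apply: mulr_ge0; lra.
have gap_delta : 0 <= (delta - (a l - cd v l)) * `|p|.
  by rewrite mulr_ge0 ?normr_ge0 //; lra.
nra.
Qed.

Lemma greatest_nef_below_exists v0 x : v0 <=e x -> Nef phi v0 ->
  exists y, greatest_nef_below x y.
Proof.
move=> v0x nv0; have [y [v0y yx ny ymax]] := greatest_nef_in_box v0x nv0.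
exists y; split=> // v vx nv; have [w cw] := join_exists v y.
have wy : w <=e y.
  apply: ymax (nef_join cw nv ny) => l; rewrite cw; first by rewrite le_max v0y orbT.
  by rewrite ge_max vx yx.
by move=> l; apply: le_trans (wy l); rewrite cw le_max lexx.
Qed.

Lemma greatest_nef_below_add0 x y w : greatest_nef_below x y ->
  (forall l, 0 <= cd w l) -> y + w <=e x -> Nef phi (y + w) -> w = 0.
Proof.
case=> _ _ ymax w0 ywx nyw; apply: (coord_inj he) => l.
have := ymax _ ywx nyw l; rewrite (coordD he) (coord0 he) gerDl => wl.
by apply/le_anti; rewrite wl w0.
Qed.

Lemma scale_coord_le w z : (forall l, 0 <= cd w l) -> (forall l, 0 <= cd z l) ->
  (forall l, cd w l != 0 -> cd z l != 0) ->
  exists2 t, 0 < t & forall l, t * cd w l <= cd z l.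
Proof.
move=> w0 z0 wz; have [s us [zw _]] := common_support he w z.
pose T := \sum_(l <- s) cd w l / cd z l.
have T0 : 0 <= T by rewrite sumr_ge0 // => l _; rewrite divr_ge0.
exists (1 + T)^-1 => [|l]; first by rewrite invr_gt0 ltr_pwDl.
have [wl0|wl0] := eqVneq (cd w l) 0; first by rewrite wl0 mulr0 z0.
have ls : (l : L) \in s by apply: contraNT wl0 => /zw ->.
have zl : 0 < cd z l by rewrite lt_def z0 andbT; apply: wz.
rewrite mulrC ler_pdivrMr ?ltr_pwDl //.
have wT : cd w l / cd z l <= T.
  by rewrite /T (bigD1_seq (l : L)) //= lerDl sumr_ge0 // => m _; rewrite divr_ge0.
have : cd w l / cd z l * cd z l = cd w l by rewrite divfK ?lt0r_neq0.
nra.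
Qed.

Lemma greatest_nef_below_orth x y l : greatest_nef_below x y ->
  cd (x - y) l != 0 -> phi l y = 0.
Proof.
move=> gy zl0; have [yx ny _] := gy.
apply/le_anti; rewrite ny andbT leNgt; apply/negP => py.
have zl : 0 < cd (x - y) l by rewrite lt_def zl0 (coordB he) subr_ge0 yx.
(* [y + t *: e l] stays below [x] as [t <= cd (x - y) l], and nef as [t] is small
   against [phi l y]; maximality of [y] then forces [t = 0]. *)
set p := phi l (e l); pose t := Num.min (cd (x - y) l) (phi l y / (`|p| + 1)).
have p1 : 0 < `|p| + 1 by rewrite ltr_pwDr.
have t_gt0 : 0 < t by rewrite lt_min zl divr_gt0.
have t_le_z : t <= cd (x - y) l by rewrite ge_min lexx.
have t_le_phi : t * (`|p| + 1) <= phi l y by rewrite -ler_pdivlMr // ge_min lexx orbT.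
have cw m : cd (t *: e l) m = t * (if m == l :> L then 1 else 0).
  by rewrite (coordZ he) (coord_e he).
have /(congr1 (fun v => cd v l)) : t *: e l = 0.
  apply: greatest_nef_below_add0 gy _ _ _ => [m|m|m].
  - by rewrite cw; case: ifP; rewrite ?mulr1 ?mulr0 // ltW.
  - rewrite (coordD he) cw -lerBrDl -(coordB he).
    by case: eqP => [->|_]; rewrite ?mulr1 // mulr0 (coordB he) subr_ge0 yx.
  rewrite raddfD /= linearZ_LR; have [->|ml] := eqVneq (m : L) l.
    have p_ge : - `|p| <= p by rewrite lerNl -normrN ler_norm.
    by rewrite -/p; nra.
  rewrite addr_ge0 ?ny ?mulr_ge0 ?(ltW t_gt0) //; apply: hphi => ml'.
  by move: ml; rewrite ml' eqxx.
by rewrite cw (coord0 he) eqxx mulr1 => t0; rewrite t0 ltxx in t_gt0.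
Qed.

Lemma greatest_nef_below_cone x y w : greatest_nef_below x y ->
  in_cone e (Supp e (x - y)) w ->
  (forall l, Supp e (x - y) l -> 0 <= phi l w) -> w = 0.
Proof.
move=> gy /coord_in_cone [w0 wS] phiw; have [yx ny _] := gy.
have z0 l : 0 <= cd (x - y) l by rewrite (coordB he) subr_ge0 yx.
have [t t_gt0 tw] : exists2 t, 0 < t & forall l, t * cd w l <= cd (x - y) l.
  by apply: scale_coord_le => // l /wS Sl; apply/eqP.
suff /eqP : t *: w = 0 by rewrite scaler_eq0 gt_eqF // => /eqP.
apply: greatest_nef_below_add0 gy _ _ _ => [l|l|l].
- by rewrite (coordZ he) mulr_ge0 // ltW.
- by have := tw l; rewrite (coordB he) (coordD he) (coordZ he) lerBrDl addrC.
rewrite raddfD /= linearZ_LR addr_ge0 ?ny // mulr_ge0 ?(ltW t_gt0) //.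
have [/eqP wl|/wS Sl] := boolP (cd w l == 0); first exact: phi_ge0_at.
exact: phiw.
Qed.

Lemma greatest_nef_below_zariski x y :
  greatest_nef_below x y -> zariski_decomp e phi x y (x - y).
Proof.
move=> gy; have [yx ny _] := gy; split.
- by rewrite addrC subrK.
- by split=> // l; rewrite (coord0 he) (coordB he) subr_ge0 yx.
- by move=> l /eqP; apply: greatest_nef_below_orth.
- by move=> w; apply: greatest_nef_below_cone gy.
Qed.

Section GramMatrix.
Variables (n : nat) (f : 'I_n -> Lam).
Hypothesis f_inj : injective f.

Local Notation Q := (\matrix_(i, j) phi (f i) (e (f j)) : 'M[R]_n).

Lemma gram_mul_col (c : 'I_n -> R) j :
  (Q *m \col_i c i) j 0 = phi (f j) (\sum_(i < n) c i *: e (f i)).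
Proof.
rewrite !mxE raddf_sum; apply: eq_bigr => i _.
by rewrite !mxE /= linearZ_LR mulrC.
Qed.

Lemma gram_metzler : metzler Q.
Proof.
move=> i j ij; rewrite mxE; apply: hphi => /f_inj fij.
by rewrite fij eqxx in ij.
Qed.

Lemma gram_cone_trivial (S : Lam -> Prop) :
  (forall l, S l <-> exists i, f i = l) ->
  (forall w, in_cone e S w -> (forall l, S l -> 0 <= phi l w) -> w = 0) ->
  nonneg_cone_trivial Q.
Proof.
move=> Sf coneS c c_ge0 Qc_ge0.
have cE : c = \col_i c i 0 by apply/matrixP => i k; rewrite (ord1 k) mxE.
have w0 : \sum_(i < n) c i 0 *: e (f i) = 0.
  apply: coneS => [|_ /Sf [j <-]]; last by have := Qc_ge0 j; rewrite {1}cE gram_mul_col.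
  by exists n, f, (fun i => c i 0); split=> // i; apply/Sf; exists i.
by rewrite cE; apply/matrixP => i k; rewrite !mxE (he.1 _ _ _ f_inj w0).
Qed.

Lemma gram_free (c : 'I_n -> R) : \det Q != 0 ->
  Num_ phi (\sum_(i < n) c i *: e (f i)) -> forall i, c i = 0.
Proof.
move=> detQ num0 i; have uQ : Q \in unitmx by rewrite unitmxE unitfE.
have : Q *m \col_i c i = 0.
  by apply/matrixP => j k; rewrite (ord1 k) gram_mul_col num0 mxE.
move/(congr1 (mulmx (invmx Q))); rewrite mulKmx // mulmx0.
by move=> /matrixP/(_ i 0); rewrite !mxE.
Qed.

End GramMatrix.
End GreatestNef.

Theorem proposition1p1p1 (R : realType) (V : lmodType R) (Lam : Type)
    (e : Lam -> V) (phi : Lam -> {scalar V})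
    (he : is_basis e)
    (hphi : forall l m : Lam, l <> m -> 0 <= phi l (e m)) :
  (* (1) existence criterion *)
  (forall x : V,
     (exists y z : V, zariski_decomp e phi x y z) <->
     (exists v : V, le_e e v x /\ Nef phi v)) /\
  (* (2) uniqueness *)
  (forall x y z y' z' : V,
     zariski_decomp e phi x y z -> zariski_decomp e phi x y' z' ->
     y = y' /\ z = z') /\
  (* (3) properties of the negative part, for any enumeration f of Supp(z;e) *)
  (forall x y z : V, zariski_decomp e phi x y z -> z <> 0 ->
   forall (n : nat) (f : 'I_n -> Lam), injective f ->
     (forall l, Supp e z l <-> exists i, f i = l) ->
     let Q : 'M[R]_n := \matrix_(i, j) phi (f i) (e (f j)) in
     (* (3.1) *)
     (0 < (-1) ^+ n * \det Q /\
      (Q^T = Q -> forall v : 'rV[R]_n, v <> 0 -> (v *m Q *m v^T) 0 0 < 0)) /\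
     (* (3.2) linear independence of {e_l}_{l in Supp z} in V / Num(phi) *)
     (forall c : 'I_n -> R,
        Num_ phi (\sum_(i < n) c i *: e (f i)) -> forall i, c i = 0)).
Proof.
split; [|split].
- move=> x; split=> [[y [z /(zariski_greatest he hphi) [yx ny _]]]|[v0 [v0x nv0]]].
    by exists y.
  have [y gy] := greatest_nef_below_exists he hphi v0x nv0.
  by exists y, (x - y); apply: greatest_nef_below_zariski.
- move=> x y z y' z' Z Z'.
  have yy' := greatest_nef_below_uniq he
    (zariski_greatest he hphi Z) (zariski_greatest he hphi Z').
  case: Z Z' => [xE _ _ _] [xE' _ _ _]; split=> //.
  by apply: (addrI y); rewrite -xE yy' -xE'.
move=> x y z [_ _ _ coneZ] _ n f f_inj Sf Q.
have mQ := gram_metzler hphi f_inj.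
have tQ := gram_cone_trivial he f_inj Sf coneZ.
have detQ := metzler_cone_det_sign mQ tQ.
split; first by split=> // sQ v /eqP; apply: metzler_cone_negdef.
by move=> c; apply: gram_free; apply: contraTneq detQ => ->; rewrite mulr0 ltxx.
Qed.
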